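(* Let $d\ge 3$, let $K$ be an algebraically closed field of characteristic $p$ with $p=0$ or $p>d$, let $X_d\subset\mathbb{P}^3(K)$ be a smooth surface of degree $d$, and let $L\subset X_d$ be a line. Then the set $$\{P\in L:\ \mathbb{T}_PX_d\cap V_P \text{ does not consist of two distinct lines}\}$$ is finite.
   Context: Let $f$ be a homogeneous defining polynomial of $X_d$. For $P=(p_0:\dots:p_3)$ and $j=1,2$ put $\mathfrak t_P^{(j)}(z):=\sum_{0\le i_1,\dots,i_j\le 3}\frac{\partial^j f}{\partial w_{i_1}\cdots\partial w_{i_j}}(p_0,\dots,p_3)\,z_{i_1}\cdots z_{i_j}$. Then $\mathbb{T}_PX_d=V(\mathfrak t_P^{(1)})\subset\mathbb{P}^3$ is the projective tangent plane of $X_d$ at $P$, and $V_P=V(\mathfrak t_P^{(2)})\subset\mathbb{P}^3$ is the Hessian quadric of $X_d$ at $P$; the intersection is taken set-theoretically. *)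

(* Quartic-variable homogeneous forms over a field K are
   represented by their coefficient functions on exponent vectors. *)
From HB Require Import structures.
From mathcomp Require Import all_boot all_order all_algebra.
Set Implicit Arguments. Unset Strict Implicit. Unset Printing Implicit Defensive.
Import Order.TTheory GRing.Theory Num.Theory.
Local Open Scope ring_scope.

(* exponent vectors (w_0^e0 w_1^e1 w_2^e2 w_3^e3) with each e_i <= d *)
Notation monom d := {ffun 'I_4 -> 'I_d.+1}.

Section Forms.
Variable K : fieldType.

Definition mon_eval (e : 'I_4 -> nat) (z : 'rV[K]_4) : K :=
  \prod_(i < 4) z 0 i ^+ e i.

(* formal iterated partial derivative d/dw_{k1} ... d/dw_{kn} of the
   monomial e, evaluated at z *)
Fixpoint dmon (ks : seq 'I_4) (e : 'I_4 -> nat) (z : 'rV[K]_4) : K :=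
  match ks with
  | [::] => mon_eval e z
  | i :: ks' => (e i)%:R * dmon ks' (fun j => if j == i then (e j).-1 else e j) z
  end.

Definition is_homog (d : nat) (c : monom d -> K) : Prop :=
  forall e : monom d, (\sum_(i < 4) (e i : nat))%N != d -> c e = 0.

Definition dform (d : nat) (ks : seq 'I_4) (c : monom d -> K) (z : 'rV[K]_4) : K :=
  \sum_(e : monom d) c e * dmon ks (fun i => (e i : nat)) z.

Definition form_eval (d : nat) (c : monom d -> K) (z : 'rV[K]_4) : K :=
  dform [::] c z.

Definition smooth_form (d : nat) (c : monom d -> K) : Prop :=
  forall z : 'rV[K]_4, z != 0 ->
    ~ (form_eval c z = 0 /\ forall i : 'I_4, dform [:: i] c z = 0).

Definition tan1 (d : nat) (c : monom d -> K) (P z : 'rV[K]_4) : K :=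
  \sum_(i < 4) dform [:: i] c P * z 0 i.
Definition tan2 (d : nat) (c : monom d -> K) (P z : 'rV[K]_4) : K :=
  \sum_(i < 4) \sum_(j < 4) dform [:: i; j] c P * z 0 i * z 0 j.

(* a line of P^3 = row space of a rank-2 2x4 matrix;
   a projective point [z] (z != 0) lies on it iff (z <= M)%MS *)
Definition is_line (M : 'M[K]_(2, 4)) : Prop := \rank M = 2%N.

Definition two_distinct_lines (d : nat) (c : monom d -> K) (P : 'rV[K]_4) : Prop :=
  exists M1 M2 : 'M[K]_(2, 4),
    [/\ is_line M1, is_line M2, ~~ (M1 == M2)%MS &
      forall z : 'rV[K]_4, z != 0 ->
        ((tan1 c P z = 0 /\ tan2 c P z = 0) <-> ((z <= M1)%MS \/ (z <= M2)%MS))].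
End Forms.

From HB Require Import structures.
From mathcomp Require Import all_boot all_order all_algebra.
From mathcomp Require Import ring zify.
Set Implicit Arguments. Unset Strict Implicit. Unset Printing Implicit Defensive.
Import Order.TTheory GRing.Theory Num.Theory.
Local Open Scope ring_scope.

(* Let g(P) be the gradient and H(P) the Hessian of f, let a, b span L, and
   p_i(t) = (d_i f)(a + t b), so that p_i' = (b H(a + t b))_i.
   (1) Differentiating f(P + t y) = 0 shows that L lies in T_P X and in V_P;
       with Euler's identity P H(P) = (d - 1) g(P), elementary linear algebra
       gives T_P X ∩ V_P = L ∪ (second line) whenever g(P), b H(P) are
       independent (Section TangentHessianLines, Lemma good_point).
   (2) At a bad point a + t b all Wronskians p_i p_j' - p_j p_i' vanish at t.
   (3) They do not all vanish identically: otherwise, since deg p_i < d is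
       below the characteristic, every p_i is a multiple of one p_k without
       roots, hence constant, and homogeneity gives g(b) = 0, contradicting
       smoothness.
   So the bad points are b and the a + t b with t a root of one nonzero
   Wronskian. *)

Section Monomials.
Variable K : fieldType.
Implicit Types (e : 'I_4 -> nat) (z : 'rV[K]_4).

(* exponent vector of d/dw_i (w^e), up to the factor e_i *)
Definition dexp e (i : 'I_4) : 'I_4 -> nat :=
  fun j => if j == i then (e j).-1 else e j.

Lemma sum_dexp e i : (0 < e i)%N -> (\sum_j dexp e i j = (\sum_j e j).-1)%N.
Proof.
move=> ei_gt0; rewrite (bigD1 i) //= [in RHS](bigD1 i) //= /dexp eqxx.
rewrite (eq_bigr (fun j => e j)); last by move=> j /negbTE ->.
by case: (e i) ei_gt0.
Qed.

Lemma dexpC e i j : dexp (dexp e i) j =1 dexp (dexp e j) i.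
Proof.
move=> k; rewrite /dexp.
by case: (eqVneq k j); case: (eqVneq k i).
Qed.

Lemma mon_evalZ e (k : K) z : mon_eval e (k *: z) = k ^+ (\sum_i e i) * mon_eval e z.
Proof.
rewrite /mon_eval -prodrXr -big_split /=; apply: eq_bigr => i _.
by rewrite mxE exprMn.
Qed.

Lemma dmonZ ks e (k : K) z :
  dmon ks e (k *: z) = k ^+ ((\sum_j e j) - size ks) * dmon ks e z.
Proof.
elim: ks e => [|i ks IH] e /=; first by rewrite subn0 mon_evalZ.
rewrite IH; case: (posnP (e i)) => [->|ei_gt0]; first by rewrite !mul0r mulr0.
rewrite sum_dexp // subnS -subn1 subnAC subn1; ring.
Qed.

Lemma mon_dexp e j z :
  (e j)%:R * (z 0 j * mon_eval (dexp e j) z) = (e j)%:R * mon_eval e z.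
Proof.
case: (posnP (e j)) => [->|ej_gt0]; first by rewrite !mul0r.
congr (_ * _); rewrite /mon_eval (bigD1 j) //= [in RHS](bigD1 j) //= /dexp eqxx.
rewrite (eq_bigr (fun k => z 0 k ^+ e k)); last by move=> k /negbTE ->.
by rewrite mulrA -exprS prednK.
Qed.

Lemma euler_mon e z :
  \sum_j z 0 j * ((e j)%:R * mon_eval (dexp e j) z) = (\sum_j e j)%:R * mon_eval e z.
Proof.
rewrite natr_sum mulr_suml; apply: eq_bigr => j _.
by rewrite mulrCA mon_dexp.
Qed.

End Monomials.

Section Forms.
Variables (K : fieldType) (d : nat) (c : monom d -> K).
Hypothesis hom : is_homog c.

Let ev (e : monom d) : 'I_4 -> nat := fun i => (e i : nat).

Lemma homE e : c e != 0 -> (\sum_i ev e i)%N = d.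
Proof. by apply: contraNeq => h; rewrite hom. Qed.

Lemma dformZ ks (k : K) (z : 'rV[K]_4) :
  dform ks c (k *: z) = k ^+ (d - size ks) * dform ks c z.
Proof.
rewrite /dform mulr_sumr; apply: eq_bigr => e _.
case: (eqVneq (c e) 0) => [->|ce0]; first by rewrite !mul0r mulr0.
by rewrite dmonZ homE //; ring.
Qed.

Lemma euler_form (z : 'rV[K]_4) :
  \sum_i z 0 i * dform [:: i] c z = d%:R * form_eval c z.
Proof.
rewrite /form_eval /dform /=.
under eq_bigr do rewrite mulr_sumr.
rewrite exchange_big mulr_sumr /=; apply: eq_bigr => e _.
case: (eqVneq (c e) 0) => [->|ce0].
  by rewrite mul0r mulr0; apply: big1 => i _; rewrite mul0r mulr0.
have := euler_mon (ev e) z; rewrite homE // => E.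
rewrite [RHS]mulrCA -E mulr_sumr.
by apply: eq_bigr => i _; rewrite /ev; ring.
Qed.

Lemma euler_grad i (z : 'rV[K]_4) :
  \sum_j z 0 j * dform [:: i; j] c z = d.-1%:R * dform [:: i] c z.
Proof.
rewrite /dform /=.
under eq_bigr do rewrite mulr_sumr.
rewrite exchange_big mulr_sumr /=; apply: eq_bigr => e _.
case: (eqVneq (c e) 0) => [->|ce0].
  by rewrite mul0r mulr0; apply: big1 => j _; rewrite mul0r mulr0.
case: (posnP (ev e i)) => [ei0|ei_gt0].
  rewrite /ev in ei0; rewrite ei0 mul0r !mulr0; apply: big1 => j _; ring.
have := euler_mon (dexp (ev e) i) z; rewrite sum_dexp // homE // => E.
rewrite [RHS]mulrCA (mulrCA d.-1%:R) -E !mulr_sumr.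
by apply: eq_bigr => j _; rewrite /ev /dexp /=; ring.
Qed.

Lemma dform2C i j (z : 'rV[K]_4) : dform [:: i; j] c z = dform [:: j; i] c z.
Proof.
rewrite /dform; apply: eq_bigr => e _ /=.
have -> : mon_eval (dexp (dexp (ev e) i) j) z = mon_eval (dexp (dexp (ev e) j) i) z.
  by apply: eq_bigr => k _; rewrite dexpC.
case: (eqVneq i j) => [-> //|nij].
by congr (_ * _); rewrite mulrCA.
Qed.

End Forms.

Section LineRestriction.
Variable K : fieldType.
Variables x0 b : 'rV[K]_4.

Definition lin_coord (j : 'I_4) : {poly K} := (x0 0 j)%:P + b 0 j *: 'X.
Definition mon_poly_seq (r : seq 'I_4) (e : 'I_4 -> nat) : {poly K} :=
  \prod_(j <- r) lin_coord j ^+ e j.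
Definition mon_poly (e : 'I_4 -> nat) : {poly K} := mon_poly_seq (index_enum 'I_4) e.

Lemma horner_mon_poly e t : (mon_poly e).[t] = mon_eval e (x0 + t *: b).
Proof.
rewrite /mon_poly /mon_poly_seq horner_prod /mon_eval; apply: eq_bigr => j _.
by rewrite /lin_coord !hornerE !mxE [t * _]mulrC.
Qed.

Lemma size_lin_coord j : (size (lin_coord j) <= 2)%N.
Proof.
rewrite /lin_coord (leq_trans (size_polyD _ _)) // geq_max.
rewrite (leq_trans (size_polyC_leq1 _)) //=.
by rewrite (leq_trans (size_scale_leq _ _)) // size_polyX.
Qed.

Lemma size_mon_poly e : (size (mon_poly e) <= (\sum_j e j).+1)%N.
Proof.
rewrite /mon_poly /mon_poly_seq.
elim/big_rec2: _ => [|j n p _ IH]; first by rewrite size_polyC; case: (_ != 0).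
apply: (leq_trans (size_polyMleq _ _)).
have sz_pow : (size (lin_coord j ^+ e j) <= (e j).+1)%N.
  apply: (leq_trans (size_poly_exp_leq _ _)); rewrite ltnS.
  by case: (size (lin_coord j)) (size_lin_coord j) => [|[|[|]]] //= _;
    rewrite ?mul0n ?mul1n.
move: sz_pow IH; set u := size _; set v := size _; lia.
Qed.

Lemma deriv_lin_coord_exp j n :
  (lin_coord j ^+ n)^`() = (n%:R * b 0 j) *: lin_coord j ^+ n.-1.
Proof.
have dlin : (lin_coord j)^`() = (b 0 j)%:P.
  by rewrite /lin_coord derivD derivC derivZ derivX add0r alg_polyC.
by rewrite deriv_exp dlin -mulr_natl -mul_polyC polyCM polyC_natr; ring.
Qed.

Lemma deriv_mon_poly_seq r e : uniq r ->
  (mon_poly_seq r e)^`() = \sum_(k <- r) ((e k)%:R * b 0 k) *: mon_poly_seq r (dexp e k).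
Proof.
elim: r e => [|a r IH] e /=; first by rewrite /mon_poly_seq big_nil derivC big_nil.
case/andP => a_notin_r uniq_r.
have dexp_a : mon_poly_seq r (dexp e a) = mon_poly_seq r e.
  apply: eq_big_seq => j jr; congr (_ ^+ _); rewrite /dexp.
  by case: eqP => // eja; rewrite -eja jr in a_notin_r.
rewrite /mon_poly_seq big_cons derivM deriv_lin_coord_exp IH // big_cons.
rewrite big_cons -/(mon_poly_seq r (dexp e a)) dexp_a /dexp eqxx.
rewrite -scalerAl; congr (_ + _).
rewrite mulr_sumr; apply: eq_big_seq => k kr.
rewrite big_cons; case: eqP => [eak|_]; first by rewrite eak kr in a_notin_r.
by rewrite scalerAr.
Qed.

Lemma deriv_mon_poly e :
  (mon_poly e)^`() = \sum_k ((e k)%:R * b 0 k) *: mon_poly (dexp e k).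
Proof. exact: deriv_mon_poly_seq (index_enum_uniq _). Qed.

End LineRestriction.

Section FormOnLine.
Variables (K : fieldType) (d : nat) (c : monom d -> K).
Variables x0 b : 'rV[K]_4.

Let ev (e : monom d) : 'I_4 -> nat := fun i => (e i : nat).

Definition form_poly : {poly K} := \sum_e c e *: mon_poly x0 b (ev e).
Definition grad_poly i : {poly K} :=
  \sum_e (c e * (ev e i)%:R) *: mon_poly x0 b (dexp (ev e) i).
Definition hess_poly i k : {poly K} :=
  \sum_e (c e * (ev e i)%:R * (dexp (ev e) i k)%:R) *:
    mon_poly x0 b (dexp (dexp (ev e) i) k).

Lemma horner_form_poly t : form_poly.[t] = form_eval c (x0 + t *: b).
Proof.
rewrite horner_sum; apply: eq_bigr => e _.
by rewrite hornerZ horner_mon_poly.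
Qed.

Lemma horner_grad_poly i t : (grad_poly i).[t] = dform [:: i] c (x0 + t *: b).
Proof.
rewrite horner_sum; apply: eq_bigr => e _.
by rewrite hornerZ horner_mon_poly /= mulrA.
Qed.

Lemma horner_hess_poly i k t : (hess_poly i k).[t] = dform [:: i; k] c (x0 + t *: b).
Proof.
rewrite horner_sum; apply: eq_bigr => e _.
by rewrite hornerZ horner_mon_poly /= !mulrA.
Qed.

Lemma deriv_form_poly : form_poly^`() = \sum_k b 0 k *: grad_poly k.
Proof.
rewrite raddf_sum /=.
under eq_bigr do rewrite derivZ deriv_mon_poly scaler_sumr.
rewrite exchange_big /=; apply: eq_bigr => k _.
rewrite scaler_sumr; apply: eq_bigr => e _.
by rewrite !scalerA; congr (_ *: _); rewrite /ev; ring.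
Qed.

Lemma deriv_grad_poly i : (grad_poly i)^`() = \sum_k b 0 k *: hess_poly i k.
Proof.
rewrite raddf_sum /=.
under eq_bigr do rewrite derivZ deriv_mon_poly scaler_sumr.
rewrite exchange_big /=; apply: eq_bigr => k _.
rewrite scaler_sumr; apply: eq_bigr => e _.
by rewrite !scalerA; congr (_ *: _); rewrite /ev; ring.
Qed.

Lemma size_grad_poly i : is_homog c -> (size (grad_poly i) <= d)%N.
Proof.
move=> hom; apply: (big_ind (fun p : {poly K} => (size p <= d)%N)).
- by rewrite size_poly0.
- by move=> p q hp hq; rewrite (leq_trans (size_polyD _ _)) // geq_max hp hq.
move=> e _.
case: (eqVneq (c e) 0) => [->|ce0]; first by rewrite mul0r scale0r size_poly0.
case: (posnP (ev e i)) => [->|ei_gt0]; first by rewrite mulr0 scale0r size_poly0.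
rewrite (leq_trans (size_scale_leq _ _)) // (leq_trans (size_mon_poly _ _ _)) //.
rewrite sum_dexp // (homE hom ce0).
have : (0 < d)%N by rewrite -(homE hom ce0) (bigD1 i) //= (leq_trans ei_gt0) ?leq_addr.
by case: d.
Qed.

End FormOnLine.

Section ClosedFieldPoly.
Variable K : closedFieldType.
Implicit Types p : {poly K}.

Lemma noroot_poly_const p : (forall t, p.[t] != 0) -> p = (p`_0)%:P.
Proof.
move=> noroot; apply: size1_polyC.
suff /eqP -> : size p == 1%N by [].
by apply/negPn/negP => /closed_rootP [x]; rewrite /root (negbTE (noroot x)).
Qed.

(* closed fields are infinite: a polynomial vanishing everywhere is zero *)
Lemma poly_eq0_of_roots p : (forall t, p.[t] = 0) -> p = 0.
Proof.
move=> p0.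
have cst : p + 1 = ((p + 1)`_0)%:P.
  by apply: noroot_poly_const => t; rewrite hornerD hornerC p0 add0r oner_neq0.
have pE : p = ((p + 1)`_0 - 1)%:P by rewrite polyCB -cst addrK.
by move: (p0 0); rewrite pE hornerC => ->.
Qed.

Lemma poly_eq0_of_nonzero_roots p : (forall t, t != 0 -> p.[t] = 0) -> p = 0.
Proof.
move=> p0.
have : 'X * p = 0.
  apply: poly_eq0_of_roots => t; rewrite hornerM hornerX.
  by case: (eqVneq t 0) => [->|/p0 ->]; rewrite ?mul0r ?mulr0.
by move/eqP; rewrite mulf_eq0 polyX_eq0 => /eqP.
Qed.

Lemma poly_roots_finite p : p != 0 -> exists rs : seq K, forall t, p.[t] = 0 -> t \in rs.
Proof.
move=> p_neq0; have [rs pE] := closed_field_poly_normal p.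
exists rs => t; rewrite {1}pE hornerZ horner_prod => /eqP.
rewrite mulf_eq0 lead_coef_eq0 (negbTE p_neq0) /= prodf_seq_eq0 => /hasP [z zr].
by rewrite hornerXsubC subr_eq0 => /eqP ->.
Qed.

End ClosedFieldPoly.

(* Wronskians.  If the Wronskian Q G' - G Q' vanishes, Q/G is locally constant;
   in characteristic 0 or larger than the degrees involved this forces Q to be
   a scalar multiple of G. *)
Section Wronskian.
Variable K : fieldType.

(* if Q G' = G Q' and Q has a root where G does not vanish, then Q = 0:
   at a root of order m + 1 the identity would force (m + 1) R(x) G(x) = 0 *)
Lemma wronskian0_root (G Q : {poly K}) x n :
  Q * G^`() = G * Q^`() -> G.[x] != 0 -> Q.[x] = 0 -> (size Q <= n)%N ->
  (forall m, (0 < m < n)%N -> m%:R != 0 :> K) -> Q = 0.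
Proof.
move=> W Gx Qx szQ char_n; apply/eqP; apply/negPn/negP => Q_neq0.
have [m [R] /= + QE] := multiplicity_XsubC Q x; rewrite Q_neq0 /= => Rx.
have R_neq0 : R != 0 by apply: contraNneq Rx => ->; rewrite root0.
case: m QE => [|m] QE; first by move: Rx; rewrite /root -Qx QE expr0 mulr1 eqxx.
set Y := 'X - x%:P in QE.
have Ym_neq0 : Y ^+ m != 0 by rewrite expf_neq0 // polyXsubC_eq0.
have m1_neq0 : m.+1%:R != 0 :> K.
  apply: char_n; move: szQ; rewrite QE size_mul ?expf_neq0 ?polyXsubC_eq0 //.
  move: R_neq0; rewrite size_exp_XsubC -size_poly_gt0; set s := size R; lia.
(* cancelling Y^m in the Wronskian identity *)
have W' : R * Y * G^`() = G * (R^`() * Y + R * m.+1%:R).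
  apply: (mulfI Ym_neq0); move: W.
  rewrite QE derivM deriv_exp derivXsubC mul1r exprS -mulr_natr => W.
  transitivity (R * (Y * Y ^+ m) * G^`()); first by ring.
  by rewrite W -polyC_natr; ring.
move: (congr1 (horner^~ x) W') => /=.
rewrite !hornerE /Y -polyC_natr hornerC subrr !mulr0 mul0r add0r => /esym/eqP.
by rewrite !mulf_eq0 (negbTE Gx) (negbTE m1_neq0) orbF; apply/negP.
Qed.

Lemma wronskian0_proportional (I : Type) n (p : I -> {poly K}) k x :
  (forall i j, p i * (p j)^`() = p j * (p i)^`()) -> (p k).[x] != 0 ->
  (forall i, (size (p i) <= n)%N) -> (forall m, (0 < m < n)%N -> m%:R != 0 :> K) ->
  forall i, p i = ((p i).[x] / (p k).[x]) *: p k.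
Proof.
move=> W pkx sz char_n i; set l := _ / _.
apply/eqP; rewrite -subr_eq0; apply/eqP.
apply: (@wronskian0_root (p k) _ x n) => //.
- by rewrite derivB derivZ -!mul_polyC mulrBl (W i k); ring.
- by rewrite hornerD hornerN hornerZ /l divfK // subrr.
- rewrite (leq_trans (size_polyD _ _)) // size_polyN geq_max sz.
  exact: leq_trans (size_scale_leq _ _) (sz k).
Qed.

End Wronskian.

Section Pairing.
Variable K : fieldType.
Implicit Types x y z : 'rV[K]_4.

Definition dot x y : K := (x *m y^T) 0 0.

Lemma dot_sum x y : dot x y = \sum_i x 0 i * y 0 i.
Proof. by rewrite /dot mxE; apply: eq_bigr => i _; rewrite mxE. Qed.

Lemma dotC x y : dot x y = dot y x.
Proof. by rewrite /dot -[x *m y^T]trmxK trmx_mul trmxK mxE. Qed.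

Lemma dotDr x y z : dot z (x + y) = dot z x + dot z y.
Proof. by rewrite /dot linearD /= mulmxDr mxE. Qed.

Lemma dotZr a x z : dot z (a *: x) = a * dot z x.
Proof. by rewrite /dot linearZ /= -scalemxAr mxE. Qed.

Lemma dotNr x z : dot z (- x) = - dot z x.
Proof. by rewrite -scaleN1r dotZr mulN1r. Qed.

Definition bil (H : 'M[K]_4) x y := dot (x *m H) y.

Lemma bil_sum H x y : bil H x y = \sum_i \sum_j x 0 i * H i j * y 0 j.
Proof.
rewrite /bil dot_sum exchange_big; apply: eq_bigr => j _.
by rewrite mxE mulr_suml; apply: eq_bigr => i _.
Qed.

Lemma bilC H x y : H^T = H -> bil H x y = bil H y x.
Proof. by move=> Hsym; rewrite /bil dotC /dot trmx_mul Hsym mulmxA. Qed.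

Lemma bilDl H x y z : bil H (x + y) z = bil H x z + bil H y z.
Proof. by rewrite /bil mulmxDl dotC dotDr !(dotC z). Qed.

Lemma bilZl H a x z : bil H (a *: x) z = a * bil H x z.
Proof. by rewrite /bil -scalemxAl dotC dotZr dotC. Qed.

Lemma bilDr H x y z : bil H z (x + y) = bil H z x + bil H z y.
Proof. exact: dotDr. Qed.

Lemma bilZr H a x z : bil H z (a *: x) = a * bil H z x.
Proof. exact: dotZr. Qed.

End Pairing.

Section TangentHessianLines.
Variables (K : fieldType) (H : 'M[K]_4) (g P b : 'rV[K]_4) (M : 'M[K]_(2, 4)) (k : K).
Hypothesis Hsym : H^T = H.
Hypothesis two_neq0 : 2%:R != 0 :> K.
Hypothesis P_neq0 : P != 0.
Hypothesis rankM : \rank M = 2%N.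
Hypotheses (PM : (P <= M)%MS) (bM : (b <= M)%MS).
Hypothesis spanM : forall x, (x <= M)%MS -> exists a1 a2, x = a1 *: P + a2 *: b.
Hypotheses (gP : dot g P = 0) (gb : dot g b = 0).
Hypothesis PH : P *m H = k *: g.
Hypothesis bb : bil H b b = 0.
Hypothesis rank_gh : \rank (col_mx g (b *m H)) = 2%N.

Let h := b *m H.

Lemma bilH_sym x y : bil H x y = bil H y x.
Proof. exact: bilC. Qed.

(* P H = k g: the form x |-> P H x^T is a multiple of g, so it kills P and b *)
Lemma bilH_P x : bil H P x = k * dot g x.
Proof. by rewrite /bil PH dotC dotZr dotC. Qed.

Lemma dot_h_P : dot h P = 0.
Proof. by rewrite -[dot h P]/(bil H b P) bilH_sym bilH_P gb mulr0. Qed.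

Lemma plane_kernel x : (x <= M)%MS <-> dot g x = 0 /\ dot h x = 0.
Proof.
have in_ker y : dot g y = 0 -> dot h y = 0 -> (y <= kermx (col_mx g h)^T)%MS.
  move=> gy hy; apply/sub_kermxP/eqP.
  rewrite tr_col_mx mul_mx_row row_mx_eq0 [y *m g^T]mx11_scalar [y *m h^T]mx11_scalar.
  by rewrite -/(dot y g) -/(dot y h) !(dotC y) gy hy raddf0 eqxx.
have on_M y : (y <= M)%MS -> dot g y = 0 /\ dot h y = 0.
  case/spanM => a1 [a2 ->]; rewrite !dotDr !dotZr gP gb.
  rewrite dot_h_P -[dot h b]/(bil H b b) bb.
  by split; ring.
have MK : (M <= kermx (col_mx g h)^T)%MS.
  apply/row_subP => i; have [gi hi] := on_M _ (row_sub i M); exact: in_ker.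
have rK : \rank (kermx (col_mx g h)^T) = 2%N by rewrite mxrank_ker mxrank_tr rank_gh.
have KM : (kermx (col_mx g h)^T <= M)%MS by rewrite -(mxrank_leqif_sup MK).2 rankM rK.
split; first exact: on_M.
by case=> gx hx; apply: submx_trans KM; apply: in_ker.
Qed.

Lemma dual_vector : exists2 v, dot g v = 0 & dot h v = 1.
Proof.
have [B gh_B] : exists B : 'M[K]_(4, 2), col_mx g h *m B = 1%:M.
  by apply/row_freeP; rewrite /row_free rank_gh.
have entry (y : 'rV[K]_4) : dot y (col 1 B)^T = (y *m B) 0 1.
  by rewrite dot_sum mxE; apply: eq_bigr => j _; rewrite !mxE.
exists (col 1 B)^T; rewrite entry.
- have := congr1 (fun A => usubmx A 0 1) gh_B.
  by rewrite mul_col_mx col_mxKu => ->; rewrite !mxE.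
- have := congr1 (fun A => dsubmx A 0 1) gh_B.
  by rewrite mul_col_mx col_mxKd => ->; rewrite !mxE.
Qed.

Section SecondPlane.
Variable v : 'rV[K]_4.
Hypotheses (gv : dot g v = 0) (hv : dot h v = 1).

Let c := bil H v v.
(* the second plane is spanned by P and w *)
Let w := 2%:R *: v - c *: b.

Lemma tangent_decomposition z :
  dot g z = 0 -> exists a1 a2, z = a1 *: P + a2 *: b + dot h z *: v.
Proof.
move=> gz; set u := dot h z.
have [a1 [a2 zE]] : exists a1 a2, z - u *: v = a1 *: P + a2 *: b.
  apply/spanM/plane_kernel; rewrite !dotDr !dotNr !dotZr gz gv hv /u.
  by split; ring.
by exists a1, a2; rewrite -zE subrK.
Qed.

Lemma quadric_coords a1 a2 u :
  bil H (a1 *: P + a2 *: b + u *: v) (a1 *: P + a2 *: b + u *: v) =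
  u * (2%:R * a2 + u * c).
Proof.
rewrite !bilDl !bilDr !bilZl !bilZr (bilH_sym b P) (bilH_sym v P) (bilH_sym v b).
rewrite !bilH_P gP gb gv bb.
by rewrite -[bil H b v]/(dot h v) hv -/c; ring.
Qed.

Lemma dot_g_w : dot g w = 0.
Proof. by rewrite dotDr dotNr !dotZr gv gb; ring. Qed.

Lemma dot_h_w : dot h w = 2%:R.
Proof. by rewrite dotDr dotNr !dotZr hv -[dot h b]/(bil H b b) bb; ring. Qed.

Lemma second_plane_spanned z :
  (z <= col_mx P w)%MS <-> exists a1 a3, z = a1 *: P + a3 *: w.
Proof.
rewrite -addsmxE; split.
  case/sub_addsmxP => [[u1 u2] /= ->].
  by exists (u1 0 0), (u2 0 0); rewrite -!mul_scalar_mx -!mx11_scalar.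
case=> a1 [a3 ->]; apply: addmx_sub_adds; exact: scalemx_sub.
Qed.

(* P and w are independent since h.P = 0 and h.w = 2 *)
Lemma rank_second_plane : \rank (col_mx P w) = 2%N.
Proof.
have w_neq0 : w != 0.
  apply/eqP => w0; move: two_neq0; rewrite -dot_h_w w0 /dot trmx0 mulmx0 mxE.
  by rewrite eqxx.
rewrite -addsmxE mxrank_disjoint_sum ?rank_rV ?P_neq0 ?w_neq0 //.
apply/eqP; rewrite -submx0; apply/row_subP => i.
move: (row_sub i (P :&: w)%MS).
rewrite sub_capmx => /andP [/sub_rVP [a1 E1] /sub_rVP [a3 E3]].
have : a3 * 2%:R = 0 by rewrite -dot_h_w -dotZr -E3 E1 dotZr dot_h_P mulr0.
move/eqP; rewrite mulf_eq0 (negbTE two_neq0) orbF => /eqP a3_0.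
by rewrite E3 a3_0 scale0r sub0mx.
Qed.

Lemma second_plane_neq : ~~ (M == col_mx P w)%MS.
Proof.
apply/negP => /andP [_ NM].
have wN : (w <= col_mx P w)%MS.
  by apply/second_plane_spanned; exists 0, 1; rewrite scale0r add0r scale1r.
have [_ hw0] := proj1 (plane_kernel w) (submx_trans wN NM).
by move: two_neq0; rewrite -dot_h_w hw0 eqxx.
Qed.

Lemma tangent_quadric_union z :
  dot g z = 0 /\ bil H z z = 0 <-> (z <= M)%MS \/ (z <= col_mx P w)%MS.
Proof.
split.
- case=> gz Qz; have [a1 [a2 zE]] := tangent_decomposition gz.
  set u := dot h z in zE; rewrite zE quadric_coords in Qz.
  case: (eqVneq u 0) => [u0|u_neq0].
    by left; rewrite zE u0 scale0r addr0 addmx_sub ?scalemx_sub.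
  move/eqP: Qz; rewrite mulf_eq0 (negbTE u_neq0) /= addr_eq0 => /eqP a2E.
  right; apply/second_plane_spanned; exists a1, (u / 2%:R); rewrite zE.
  have -> : a2 = (2%:R * a2) / 2%:R by rewrite mulrC mulKf.
  rewrite a2E; apply/rowP => j; rewrite !mxE; field; exact: two_neq0.
- case=> [zM | /second_plane_spanned [a1 [a3 ->]]].
    have [gz _] := proj1 (plane_kernel z) zM; split=> //.
    have [a1 [a2 ->]] := spanM zM.
    have -> : a1 *: P + a2 *: b = a1 *: P + a2 *: b + 0 *: v by rewrite scale0r addr0.
    by rewrite quadric_coords mul0r.
  split; first by rewrite dotDr !dotZr gP dot_g_w; ring.
  have -> : a1 *: P + a3 *: w = a1 *: P + (- (a3 * c)) *: b + (a3 * 2%:R) *: v.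
    by apply/rowP => j; rewrite !mxE; ring.
  by rewrite quadric_coords; ring.
Qed.

End SecondPlane.

Lemma tangent_hessian_two_lines :
  exists M1 M2 : 'M[K]_(2, 4), [/\ \rank M1 = 2%N, \rank M2 = 2%N, ~~ (M1 == M2)%MS &
    forall z, dot g z = 0 /\ bil H z z = 0 <-> (z <= M1)%MS \/ (z <= M2)%MS].
Proof.
have [v gv hv] := dual_vector.
exists M, (col_mx P (2%:R *: v - bil H v v *: b)); split.
- exact: rankM.
- exact: rank_second_plane.
- exact: second_plane_neq.
- exact: tangent_quadric_union.
Qed.

End TangentHessianLines.

Section GradientHessian.
Variables (K : fieldType) (d : nat) (c : monom d -> K).

Definition grad (z : 'rV[K]_4) : 'rV[K]_4 := \row_i dform [:: i] c z.
Definition hess (z : 'rV[K]_4) : 'M[K]_4 := \matrix_(i, j) dform [:: i; j] c z.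

Lemma tan1E P z : tan1 c P z = dot (grad P) z.
Proof. by rewrite dot_sum; apply: eq_bigr => i _; rewrite mxE. Qed.

Lemma tan2E P z : tan2 c P z = bil (hess P) z z.
Proof.
rewrite bil_sum; apply: eq_bigr => i _; apply: eq_bigr => j _.
by rewrite mxE; ring.
Qed.

Lemma hess_sym z : (hess z)^T = hess z.
Proof. by apply/matrixP => i j; rewrite !mxE dform2C. Qed.

Hypothesis hom : is_homog c.

Lemma gradZ k z : grad (k *: z) = k ^+ d.-1 *: grad z.
Proof. by apply/rowP => i; rewrite !mxE dformZ // subn1. Qed.

Lemma hessZ k z : hess (k *: z) = k ^+ (d - 2) *: hess z.
Proof. by apply/matrixP => i j; rewrite !mxE dformZ. Qed.

Lemma euler_dot_grad z : dot (grad z) z = d%:R * form_eval c z.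
Proof. by rewrite dotC dot_sum -euler_form //; apply: eq_bigr => i _; rewrite mxE. Qed.

Lemma euler_hess z : z *m hess z = d.-1%:R *: grad z.
Proof.
apply/rowP => j; rewrite !mxE -euler_grad //; apply: eq_bigr => i _.
by rewrite !mxE dform2C.
Qed.

End GradientHessian.

Lemma dependent_of_rank (K : fieldType) (u v : 'rV[K]_4) :
  u != 0 -> \rank (col_mx u v) != 2%N -> exists l, v = l *: u.
Proof.
move=> u_neq0 rk_uv.
have su : (u <= col_mx u v)%MS by rewrite -addsmxE addsmxSl.
have sv : (v <= col_mx u v)%MS by rewrite -addsmxE addsmxSr.
have [le1 eq1] := mxrank_leqif_sup su; rewrite rank_rV u_neq0 in le1 eq1.
have r2 : (\rank (col_mx u v) <= 2)%N by apply: rank_leq_row.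
have suv : (col_mx u v <= u)%MS by rewrite -eq1; apply/eqP; move: le1 r2 rk_uv; lia.
by apply/sub_rVP; exact: submx_trans sv suv.
Qed.

Section LineOnSurface.
Variables (K : closedFieldType) (d : nat).
Hypothesis hd : (3 <= d)%N.
Hypothesis hchar : forall p : nat, p \in [pchar K] -> (d < p)%N.
Variable f : monom d -> K.
Hypothesis hhom : is_homog f.
Hypothesis hsmooth : smooth_form f.
Variable L : 'M[K]_(2, 4).
Hypothesis hL : is_line L.
Hypothesis hLX : forall z : 'rV[K]_4, (z <= L)%MS -> form_eval f z = 0.

Local Notation grad := (grad f).
Local Notation hess := (hess f).

Lemma char_small m : (0 < m < d)%N -> m%:R != 0 :> K.
Proof.
case/andP=> m_gt0 m_lt_d; rewrite natf_neq0_pchar; apply/(pnatP _ m_gt0) => p p_pr p_dvd.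
rewrite !inE; apply/negP => /hchar; have := dvdn_leq m_gt0 p_dvd; lia.
Qed.

Lemma grad_neq0 x : (x <= L)%MS -> x != 0 -> grad x != 0.
Proof.
move=> xL x_neq0; apply/eqP => gx0; apply: (hsmooth x_neq0); split; first exact: hLX.
by move=> i; have := congr1 (fun u : 'rV[K]_4 => u 0 i) gx0; rewrite !mxE.
Qed.

(* L lies in T_x X and in V_x for every x in L: differentiate f(x + t y) = 0 *)
Lemma line_in_tangent_cone x y : (x <= L)%MS -> (y <= L)%MS ->
  dot (grad x) y = 0 /\ bil (hess x) y y = 0.
Proof.
move=> xL yL.
have F0 : form_poly f x y = 0.
  apply: poly_eq0_of_roots => t; rewrite horner_form_poly hLX //.
  by rewrite addmx_sub ?scalemx_sub.
have dF0 := congr1 deriv F0; rewrite deriv_form_poly derivC in dF0.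
have ddF0 : \sum_k y 0 k *: (\sum_l y 0 l *: hess_poly f x y k l) = 0.
  have := congr1 deriv dF0; rewrite raddf_sum derivC => E.
  rewrite -[RHS]E; apply: eq_bigr => k _.
  by rewrite -[RHS]/(deriv (y 0 k *: grad_poly f x y k)) derivZ deriv_grad_poly.
have at0 : x + 0 *: y = x by rewrite scale0r addr0.
split.
  have := congr1 (horner^~ 0) dF0; rewrite /= horner_sum hornerC => <-.
  rewrite dot_sum; apply: eq_bigr => i _.
  by rewrite hornerZ horner_grad_poly at0 mxE mulrC.
have := congr1 (horner^~ 0) ddF0; rewrite /= horner_sum hornerC => <-.
rewrite bil_sum; apply: eq_bigr => i _; rewrite hornerZ horner_sum mulr_sumr.
by apply: eq_bigr => j _; rewrite hornerZ horner_hess_poly at0 mxE; ring.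
Qed.

(* a gradient that is constant along x + t y forces grad y = 0, by homogeneity *)
Lemma grad_const_along x y (G : 'rV[K]_4) :
  (forall t, grad (x + t *: y) = G) -> grad y = 0.
Proof.
move=> cst; apply/rowP => i; rewrite !mxE.
have q0 : grad_poly f y x i - G 0 i *: 'X^(d.-1) = 0.
  apply: poly_eq0_of_nonzero_roots => u u_neq0.
  have yxE : y + u *: x = u *: (x + u^-1 *: y) by apply/rowP => j; rewrite !mxE; field.
  rewrite hornerD hornerN hornerZ hornerXn horner_grad_poly yxE dformZ //.
  have := congr1 (fun v : 'rV[K]_4 => v 0 i) (cst u^-1); rewrite /= mxE => ->.
  by rewrite subn1 mulrC subrr.
move: (congr1 (horner^~ 0) q0) => /=.
rewrite hornerD hornerN hornerZ hornerXn horner_grad_poly scale0r addr0 expr0n /=.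
have -> : (d.-1 == 0)%N = false by apply/negbTE; lia.
by rewrite mulr0 subr0 horner0.
Qed.

Local Notation a := (row ord0 L).
Local Notation b := (row (lift ord0 ord0) L).

Lemma line_span x : (x <= L)%MS -> exists al be, x = al *: a + be *: b.
Proof.
case/submxP => D ->; rewrite mulmx_sum_row !big_ord_recl big_ord0 addr0.
by exists (D 0 ord0), (D 0 (lift ord0 ord0)).
Qed.

Lemma line_comb al be : ((al *: a + be *: b)%R <= L)%MS.
Proof. by rewrite addmx_sub ?scalemx_sub ?row_sub. Qed.

Lemma line_comb_free al be : al *: a + be *: b = 0 -> al = 0 /\ be = 0.
Proof.
move=> abE.
have [B LB] : exists B : 'M[K]_(4, 2), L *m B = 1%:M.
  by apply/row_freeP; rewrite /row_free hL.
set u : 'rV[K]_2 := \row_i (if i == ord0 then al else be).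
have uL : u *m L = 0 by rewrite mulmx_sum_row !big_ord_recl big_ord0 addr0 !mxE -abE.
have u0 : u = 0 by rewrite -[u]mulmx1 -LB mulmxA uL mul0mx.
have coord j : u 0 j = 0 by rewrite u0 mxE.
by split; [move: (coord ord0) | move: (coord (lift ord0 ord0))]; rewrite mxE.
Qed.

Lemma line_comb_neq0 al be : (al != 0) || (be != 0) -> al *: a + be *: b != 0.
Proof. by apply: contraTneq => /line_comb_free [-> ->]; rewrite eqxx. Qed.

Lemma a_neq0 : a != 0.
Proof. by have := @line_comb_neq0 1 0; rewrite oner_eq0 scale0r addr0 scale1r; apply. Qed.

Lemma b_neq0 : b != 0.
Proof.
by have := @line_comb_neq0 0 1; rewrite oner_eq0 orbT scale0r add0r scale1r; apply.
Qed.

Lemma good_point P : P != 0 -> (P <= L)%MS ->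
  (forall x, (x <= L)%MS -> exists a1 a2, x = a1 *: P + a2 *: b) ->
  \rank (col_mx (grad P) (b *m hess P)) = 2%N -> two_distinct_lines f P.
Proof.
move=> P_neq0 PL spanL rk.
have two_neq0 : 2%:R != 0 :> K by apply: char_small; lia.
have [gPb Qbb] := line_in_tangent_cone PL (row_sub (lift ord0 ord0) L).
have gPP : dot (grad P) P = 0 by rewrite euler_dot_grad // hLX // mulr0.
have [M1 [M2 [r1 r2 n12 union]]] := tangent_hessian_two_lines (hess_sym f P) two_neq0
  P_neq0 hL PL (row_sub _ L) spanL gPP gPb (euler_hess hhom P) Qbb rk.
exists M1, M2; split => // z _; rewrite tan1E tan2E; exact: union.
Qed.

Lemma line_point t : ((a + t *: b)%R <= L)%MS.
Proof. by have := line_comb 1 t; rewrite scale1r. Qed.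

Lemma line_point_neq0 t : a + t *: b != 0.
Proof. by have := @line_comb_neq0 1 t; rewrite oner_eq0 scale1r; apply. Qed.

Local Notation p := (grad_poly f a b).

Definition wronskian i j : {poly K} := p i * (p j)^`() - p j * (p i)^`().

(* since p_i' = (b H)_i, the Wronskians vanish at t iff grad and b H are dependent *)
Lemma horner_wronskian i j t :
  (wronskian i j).[t] =
  grad (a + t *: b) 0 i * (b *m hess (a + t *: b)) 0 j
  - grad (a + t *: b) 0 j * (b *m hess (a + t *: b)) 0 i.
Proof.
have dp k : ((p k)^`()).[t] = (b *m hess (a + t *: b)) 0 k.
  rewrite deriv_grad_poly horner_sum !mxE; apply: eq_bigr => l _.
  by rewrite hornerZ horner_hess_poly !mxE dform2C.
by rewrite hornerD hornerN !hornerM !dp !horner_grad_poly !mxE.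
Qed.

Lemma bad_point_wronskian al t : al != 0 ->
  ~ two_distinct_lines f (al *: (a + t *: b)) -> forall i j, (wronskian i j).[t] = 0.
Proof.
move=> al_neq0 bad i j; set x := a + t *: b.
have PL : (al *: x <= L)%MS by rewrite scalemx_sub ?line_point.
have P_neq0 : al *: x != 0 by rewrite scaler_eq0 negb_or al_neq0 line_point_neq0.
have spanL y : (y <= L)%MS -> exists a1 a2, y = a1 *: (al *: x) + a2 *: b.
  case/line_span => al' [be' ->]; exists (al' / al), (be' - al' * t).
  by apply/rowP => l; rewrite !mxE; field.
have [l hl] : exists l, b *m hess (al *: x) = l *: grad (al *: x).
  apply: dependent_of_rank; first exact: grad_neq0.
  by apply/eqP => rk; apply: bad; apply: good_point.
have hx : b *m hess x = (l * al) *: grad x.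
  apply: (GRing.scalerI (expf_neq0 (d - 2) al_neq0)).
  rewrite scalemxAr -hessZ // hl gradZ // !scalerA.
  have -> : d.-1 = (d - 2).+1 by lia.
  by rewrite exprS; congr (_ *: _); ring.
by rewrite horner_wronskian -/x hx !mxE; ring.
Qed.

Lemma wronskians_not_all_zero : ~ (forall i j, p i * (p j)^`() = p j * (p i)^`()).
Proof.
move=> W.
have [k pk0] : exists k, (p k).[0] != 0.
  apply/existsP; apply: contraR (grad_neq0 (row_sub ord0 L) a_neq0) => /existsPn p0.
  apply/eqP/rowP => k; move: (p0 k); rewrite negbK horner_grad_poly scale0r addr0.
  by rewrite !mxE => /eqP.
have prop_pk :=
  wronskian0_proportional W pk0 (fun i => size_grad_poly a b i hhom) char_small.
have pk_noroot t : (p k).[t] != 0.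
  apply: contraNneq (grad_neq0 (line_point t) (line_point_neq0 t)) => pkt.
  by apply/eqP/rowP => i; rewrite !mxE -horner_grad_poly (prop_pk i) hornerZ pkt mulr0.
have pk_const t : (p k).[t] = (p k).[0].
  by rewrite (noroot_poly_const pk_noroot) !hornerC.
have grad_b0 : grad b = 0.
  apply: (@grad_const_along a b (\row_i (p i).[0])) => t.
  by apply/rowP => i; rewrite !mxE -horner_grad_poly (prop_pk i) !hornerZ pk_const.
by move: (grad_neq0 (row_sub (lift ord0 ord0) L) b_neq0); rewrite grad_b0 eqxx.
Qed.

Lemma nonzero_wronskian : exists i j, wronskian i j != 0.
Proof.
have [/existsP [i /existsP [j Wij]]|/existsPn none] :=
  boolP [exists i, exists j, wronskian i j != 0]; first by exists i, j.
exfalso; apply: wronskians_not_all_zero => i j; apply/eqP; rewrite -subr_eq0.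
by move/existsPn: (none i) => /(_ j); rewrite negbK.
Qed.

End LineOnSurface.

Unset Implicit Arguments. Set Strict Implicit.

Theorem lemma2p6 (K : closedFieldType) (d : nat) (hd : (3 <= d)%N)
  (hchar : forall p : nat, p \in [pchar K] -> (d < p)%N)
  (f : monom d -> K) (hhom : is_homog f) (hf0 : exists e, f e != 0)
  (hsmooth : smooth_form f)
  (L : 'M[K]_(2, 4)) (hL : is_line L)
  (hLX : forall z : 'rV[K]_4, (z <= L)%MS -> form_eval f z = 0) :
  exists s : seq 'rV[K]_4,
    forall P : 'rV[K]_4, P != 0 -> (P <= L)%MS ->
      ~ two_distinct_lines f P ->
      exists2 Q, Q \in s & (P <= Q)%MS.
Proof.
have [i [j W_neq0]] := nonzero_wronskian hd hchar hhom hsmooth hL hLX.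
have [rs rootsW] := poly_roots_finite W_neq0.
set a := row ord0 L; set b := row (lift ord0 ord0) L.
exists (b :: [seq a + t *: b | t <- rs]) => P P_neq0 PL bad.
have [al [be PE]] := line_span PL.
have [al0|al_neq0] := eqVneq al 0.
  by exists b; rewrite ?mem_head // PE al0 scale0r add0r scalemx_sub.
have PE' : P = al *: (a + (be / al) *: b).
  by rewrite PE; apply/rowP => k; rewrite !mxE; field.
exists (a + (be / al) *: b); last by rewrite PE' scalemx_sub.
rewrite inE; apply/orP; right; apply/mapP; exists (be / al) => //; apply: rootsW.
by apply: (bad_point_wronskian hd hchar hhom hsmooth hL hLX al_neq0); rewrite -PE'.
Qed.
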